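(* Let $0<\alpha<1$, $\sigma=1-\alpha/2$, $l,T>0$, $N,M\ge1$, $h=l/N$, $x_i=ih$, $\tau=T/M$, $t_j=j\tau$, $t_{j+\sigma}=(j+\sigma)\tau$. Let $k(t)\ge c_1>0$, $q(t)\ge0$ be continuous on $[0,T]$, $f$ continuous on $[0,l]\times[0,T]$, and $u_0$ a function on $[0,l]$. Set $a^{j+1}=k(t_{j+\sigma})$, $d^{j+1}=q(t_{j+\sigma})$, $\varphi_i^{j+1}=f(x_i,t_{j+\sigma})$ ($0\le i\le N$). Let $y$ solve $$\Delta^\alpha_{0t_{j+\sigma}}\mathcal H_hy_i=a^{j+1}y^{(\sigma)}_{\bar xx,i}-d^{j+1}\mathcal H_hy_i^{(\sigma)}+\mathcal H_h\varphi_i^{j+1},\quad i=1,\dots,N-1,\ j=0,\dots,M-1,$$ $$y_0^j=y_N^j=0,\qquad y_i^0=u_0(x_i).$$ Then the scheme is unconditionally stable and for every $j=0,\dots,M-1$ $$\|\mathcal H_hy^{j+1}\|_0^2\le\|\mathcal H_hy^0\|_0^2+\frac{l^2T^\alpha\Gamma(1-\alpha)}{c_1}\max_{1\le j\le M}\|\mathcal H_h\varphi^j\|_0^2 .$$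
   Context: $(y,v)=\sum_{i=1}^{N-1}y_iv_ih$, $\|y\|_0^2=(y,y)$; $v_{\bar xx,i}=(v_{i+1}-2v_i+v_{i-1})/h^2$; $\mathcal H_hv_i=v_i+\frac{h^2}{12}v_{\bar xx,i}=\frac{v_{i-1}+10v_i+v_{i+1}}{12}$ for $i=1,\dots,N-1$; $y^{(\sigma)}=\sigma y^{j+1}+(1-\sigma)y^j$. The discrete fractional derivative of a mesh function $w$ is $\Delta^\alpha_{0t_{j+\sigma}}w=\frac{\tau^{1-\alpha}}{\Gamma(2-\alpha)}\sum_{s=0}^{j}c_{j-s}\frac{w^{s+1}-w^s}{\tau}$, with $a_0=\sigma^{1-\alpha}$, $a_m=(m+\sigma)^{1-\alpha}-(m-1+\sigma)^{1-\alpha}$ ($m\ge1$), $b_m=\frac{1}{2-\alpha}[(m+\sigma)^{2-\alpha}-(m-1+\sigma)^{2-\alpha}]-\frac12[(m+\sigma)^{1-\alpha}+(m-1+\sigma)^{1-\alpha}]$ ($m\ge1$); for $j=0$, $c_0=a_0$; for $j\ge1$, $c_0=a_0+b_1$, $c_s=a_s+b_{s+1}-b_s$ ($1\le s\le j-1$), $c_j=a_j-b_j$. *)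

From Stdlib Require Import Reals.
From Coquelicot Require Import Coquelicot.
Open Scope R_scope.

Definition Gamma (s : R) : R :=
  RInt_gen (fun t => Rpower t (s - 1) * exp (- t))
           (at_right 0) (Rbar_locally p_infty).

Fixpoint rsum (n : nat) (g : nat -> R) : R :=
  match n with O => 0 | S n' => rsum n' g + g n' end.

Fixpoint rmax_upto (n : nat) (g : nat -> R) : R :=
  match n with O => g O | S n' => Rmax (rmax_upto n' g) (g (S n')) end.

Definition norm0_sq (N : nat) (h : R) (v : nat -> R) : R :=
  rsum (N - 1) (fun i => v (S i) * v (S i) * h).

Definition dxx (h : R) (v : nat -> R) (i : nat) : R :=
  (v (S i) - 2 * v i + v (Nat.pred i)) / (h * h).

Definition Hh (v : nat -> R) (i : nat) : R :=
  (v (Nat.pred i) + 10 * v i + v (S i)) / 12.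

Definition a_coef (alpha sigma : R) (m : nat) : R :=
  match m with
  | O => Rpower sigma (1 - alpha)
  | S _ => Rpower (INR m + sigma) (1 - alpha) - Rpower (INR m - 1 + sigma) (1 - alpha)
  end.

Definition b_coef (alpha sigma : R) (m : nat) : R :=
  / (2 - alpha) * (Rpower (INR m + sigma) (2 - alpha) - Rpower (INR m - 1 + sigma) (2 - alpha))
  - / 2 * (Rpower (INR m + sigma) (1 - alpha) + Rpower (INR m - 1 + sigma) (1 - alpha)).

Definition c_coef (alpha sigma : R) (j s : nat) : R :=
  match j with
  | O => a_coef alpha sigma 0
  | S _ =>
    match s with
    | O => a_coef alpha sigma 0 + b_coef alpha sigma 1
    | S _ => if Nat.eqb s j then a_coef alpha sigma j - b_coef alpha sigma j
             else a_coef alpha sigma s + b_coef alpha sigma (S s) - b_coef alpha sigma s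
    end
  end.

Definition frac_diff (alpha sigma tau : R) (w : nat -> R) (j : nat) : R :=
  Rpower tau (1 - alpha) / Gamma (2 - alpha) *
  rsum (S j) (fun s => c_coef alpha sigma j (j - s) * ((w (S s) - w s) / tau)).

(* Test the scheme against [H_h y^(σ)].  Alikhanov's inequality
   [v^(σ) Δ^α v >= 1/2 Δ^α (v^2)], which holds because the L1-2 coefficients [c_s]
   decrease in [s] and [c_0], [c_1] satisfy [(1-σ)^2 c_1 <= (2σ-1)(c_0 - c_1)] for
   [σ = 1 - α/2], turns the left-hand side into [1/2 Δ^α E] with [E^s = |H_h y^s|^2].
   On the right, [(-y_xx, H_h y) >= 4/(3 l^2) |H_h y|^2] and Young's inequality leave
   [3 l^2 / (16 a) |H_h φ|^2].  The resulting bound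
   [Σ_s c_(j-s) (E^(s+1) - E^s) <= c_j P], where [c_j >= (1-α) (j+σ)^(-α) >= (1-α) M^(-α)]
   absorbs the factor [τ^α / Γ(2-α)], gives [E^(j+1) <= E^0 + P] by a discrete Grönwall
   argument.  The properties of the [c_s] are proved for the real-variable functions
   [x = s + σ |-> c_s], by integrating derivatives whose sign comes from [y^(-α)] being
   decreasing and convex. *)

From Stdlib Require Import Reals Lra Lia Psatz Classical.
From Coquelicot Require Import Coquelicot.
Open Scope R_scope.

(** * Finite sums *)

Lemma rsum_S n g : rsum (S n) g = rsum n g + g n.
Proof. reflexivity. Qed.

Lemma rsum_ext n f g : (forall i, (i < n)%nat -> f i = g i) -> rsum n f = rsum n g.
Proof.
  induction n as [|n IH]; intros h; simpl; [reflexivity|].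
  rewrite IH, h; [reflexivity | lia | intros i hi; apply h; lia].
Qed.

Lemma rsum_le n f g : (forall i, (i < n)%nat -> f i <= g i) -> rsum n f <= rsum n g.
Proof.
  induction n as [|n IH]; intros h; simpl; [lra|].
  assert (rsum n f <= rsum n g) by (apply IH; intros i hi; apply h; lia).
  assert (f n <= g n) by (apply h; lia).
  lra.
Qed.

Lemma rsum_0 n : rsum n (fun _ => 0) = 0.
Proof. induction n as [|n IH]; simpl; [reflexivity | rewrite IH; ring]. Qed.

Lemma rsum_nonneg n f : (forall i, (i < n)%nat -> 0 <= f i) -> 0 <= rsum n f.
Proof. intros h. rewrite <- (rsum_0 n). now apply rsum_le. Qed.

Lemma rsum_plus n f g : rsum n (fun i => f i + g i) = rsum n f + rsum n g.
Proof. induction n as [|n IH]; simpl; [ring | rewrite IH; ring]. Qed.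

Lemma rsum_minus n f g : rsum n (fun i => f i - g i) = rsum n f - rsum n g.
Proof. induction n as [|n IH]; simpl; [ring | rewrite IH; ring]. Qed.

Lemma rsum_scal_l n c f : rsum n (fun i => c * f i) = c * rsum n f.
Proof. induction n as [|n IH]; simpl; [ring | rewrite IH; ring]. Qed.

Lemma rsum_scal_r n c f : rsum n (fun i => f i * c) = rsum n f * c.
Proof. induction n as [|n IH]; simpl; [ring | rewrite IH; ring]. Qed.

Lemma rsum_swap n m (f : nat -> nat -> R) :
  rsum n (fun i => rsum m (fun s => f i s)) = rsum m (fun s => rsum n (fun i => f i s)).
Proof.
  induction n as [|n IH]; simpl.
  - now rewrite rsum_0.
  - now rewrite IH, <- rsum_plus.
Qed.

Lemma rsum_le_length n m f : (n <= m)%nat -> (forall i, 0 <= f i) -> rsum n f <= rsum m f.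
Proof. intros hnm hf. induction hnm as [|m _ IH]; simpl; [lra | specialize (hf m); lra]. Qed.

Lemma rsum_shift n (Q : nat -> R) : rsum n Q = Q 0%nat + rsum n (fun i => Q (S i)) - Q n.
Proof. induction n as [|n IH]; simpl; [ring | rewrite IH; ring]. Qed.

Lemma rsum_shift2 n (Q : nat -> R) :
  rsum n (fun i => Q (S (S i))) = rsum n (fun i => Q (S i)) - Q 1%nat + Q (S n).
Proof. induction n as [|n IH]; simpl; [ring | rewrite IH; ring]. Qed.

Lemma rsum_telescope (v : nat -> R) i : v (S i) = v 0%nat + rsum (S i) (fun k => v (S k) - v k).
Proof.
  induction i as [|i IH]; [simpl; ring|].
  change (rsum (S (S i)) (fun k => v (S k) - v k))
    with (rsum (S i) (fun k => v (S k) - v k) + (v (S (S i)) - v (S i))).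
  lra.
Qed.

Lemma rsum_INR_S n : rsum n (fun i => INR (S i)) = INR n * (INR n + 1) / 2.
Proof.
  induction n as [|n IH]; [simpl; field|].
  change (rsum (S n) (fun i => INR (S i))) with (rsum n (fun i => INR (S i)) + INR (S n)).
  rewrite IH, !S_INR. field.
Qed.

Lemma rsum_Cauchy_Schwarz n a : rsum n a * rsum n a <= INR n * rsum n (fun i => a i * a i).
Proof.
  induction n as [|n IH]; [simpl; lra|].
  simpl rsum. rewrite S_INR.
  assert (hQ : 0 <= rsum n (fun i => a i * a i)) by (apply rsum_nonneg; intros; nra).
  destruct n as [|n]; [simpl; nra|].
  assert (hn : 0 < INR (S n)) by (apply lt_0_INR; lia).
  set (s := rsum (S n) a) in *. set (q := rsum (S n) (fun i => a i * a i)) in *.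
  set (m := INR (S n)) in *. set (b := a (S n)).
  assert (2 * s * b * m <= s * s + m * m * (b * b))
    by (pose proof (Rle_0_sqr (s - m * b)); unfold Rsqr in *; nra).
  assert (2 * s * b <= q + m * (b * b)) by (apply Rmult_le_reg_r with m; nra).
  nra.
Qed.

Lemma rsum_by_parts n (v D : nat -> R) : (forall i, D i = v (S i) - v i) ->
  rsum n (fun i => (D i - D (S i)) * v (S i))
  = rsum (S n) (fun i => D i * D i) + v 0%nat * D 0%nat - v (S n) * D n.
Proof.
  intros hD. induction n as [|n IH]; simpl rsum in *; [rewrite !hD; ring|].
  rewrite IH, !hD. ring.
Qed.

Lemma nondecr_of_derive_nonneg (H dH : R -> R) (a b : R) : a <= b ->
  (forall u, a <= u <= b -> is_derive H u (dH u)) ->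
  (forall u, a <= u <= b -> 0 <= dH u) -> H a <= H b.
Proof.
  intros hab hd hp.
  destruct (MVT_gen H a b dH) as [c [hc e]].
  - intros u hu. apply hd. rewrite Rmin_left, Rmax_right in hu by lra. lra.
  - intros u hu. rewrite Rmin_left, Rmax_right in hu by lra.
    apply continuity_pt_filterlim, (@ex_derive_continuous R_AbsRing R_NormedModule).
    eexists; apply hd; lra.
  - rewrite Rmin_left, Rmax_right in hc by lra.
    assert (0 <= dH c) by (apply hp; lra). nra.
Qed.

Lemma nonincr_of_derive_nonpos (H dH : R -> R) (a b : R) : a <= b ->
  (forall u, a <= u <= b -> is_derive H u (dH u)) ->
  (forall u, a <= u <= b -> dH u <= 0) -> H b <= H a.
Proof.
  intros hab hd hp.
  enough (- H a <= - H b) by lra.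
  apply (nondecr_of_derive_nonneg (fun u => - H u) (fun u => - dH u)); [lra| |].
  - intros u hu. now apply (@is_derive_opp R_AbsRing R_NormedModule), hd.
  - intros u hu. specialize (hp u hu). lra.
Qed.

(** * The kernel [y^(-α)] and its primitives *)

Lemma Rpower_pos y e : 0 < Rpower y e.
Proof. apply exp_pos. Qed.

Lemma Rpower_base_1 e : Rpower 1 e = 1.
Proof. unfold Rpower. now rewrite ln_1, Rmult_0_r, exp_0. Qed.

(* All three are written through [y^(1-α)], so that [auto_derive] followed by
   [field] establishes [rpow2' = rpow1] and [rpow1' = (1-α) rpowm]. *)
Definition rpow1 al y := Rpower y (1 - al).
Definition rpowm al y := rpow1 al y / y.
Definition rpow2 al y := y * rpow1 al y / (2 - al).

Lemma rpow1_rpowm al y : 0 < y -> rpow1 al y = y * rpowm al y.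
Proof. intros. unfold rpowm. field. lra. Qed.

Lemma rpowm_Rpower al y : 0 < y -> rpowm al y = / Rpower y al.
Proof.
  intros hy. unfold rpowm, rpow1.
  replace (1 - al) with (- al + 1) by ring.
  rewrite Rpower_plus, Rpower_1, Rpower_Ropp by exact hy.
  pose proof (Rpower_pos y al). field. lra.
Qed.

Lemma rpowm_pos al y : 0 < y -> 0 < rpowm al y.
Proof. intros hy. rewrite rpowm_Rpower by exact hy. apply Rinv_0_lt_compat, Rpower_pos. Qed.

Lemma rpowm_antitone al y z : 0 <= al -> 0 < y <= z -> rpowm al z <= rpowm al y.
Proof.
  intros ha hyz. rewrite !rpowm_Rpower by lra.
  apply Rinv_le_contravar; [apply Rpower_pos | apply Rle_Rpower_l; lra].
Qed.

Lemma rpowm_1 al : rpowm al 1 = 1.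
Proof. unfold rpowm, rpow1. rewrite Rpower_base_1. field. Qed.

Lemma rpowm_le_1 al y : 0 <= al -> 1 <= y -> rpowm al y <= 1.
Proof. intros ha hy. rewrite <- (rpowm_1 al). apply rpowm_antitone; lra. Qed.

Lemma rpowm_ge_1 al y : 0 <= al -> 0 < y <= 1 -> 1 <= rpowm al y.
Proof. intros ha hy. rewrite <- (rpowm_1 al). apply rpowm_antitone; lra. Qed.

Lemma rpowm_diff_antitone al y z : 0 <= al -> 0 < y <= z ->
  rpowm al z - rpowm al (z + 1) <= rpowm al y - rpowm al (y + 1).
Proof.
  intros ha hyz.
  apply (nonincr_of_derive_nonpos (fun t => rpowm al t - rpowm al (t + 1))
    (fun t => - al * (rpowm al t / t) - - al * (rpowm al (t + 1) / (t + 1)))); [lra| |].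
  - intros u hu. unfold rpowm, rpow1, Rpower. auto_derive; [repeat split; lra | field; lra].
  - intros u hu.
    assert (rpowm al (u + 1) <= rpowm al u) by (apply rpowm_antitone; lra).
    assert (0 < rpowm al (u + 1)) by (apply rpowm_pos; lra).
    assert (rpowm al (u + 1) / (u + 1) <= rpowm al u / u).
    { unfold Rdiv. apply Rmult_le_compat; try lra.
      - left; apply Rinv_0_lt_compat; lra.
      - apply Rinv_le_contravar; lra. }
    nra.
Qed.

Lemma rpowm_lipschitz al y z : 0 <= al -> 1 <= y <= z -> rpowm al y - rpowm al z <= al * (z - y).
Proof.
  intros ha hyz.
  enough (rpowm al y + al * y <= rpowm al z + al * z) by lra.
  apply (nondecr_of_derive_nonneg (fun t => rpowm al t + al * t)
    (fun t => - al * (rpowm al t / t) + al)); [lra| |].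
  - intros u hu. unfold rpowm, rpow1, Rpower. auto_derive; [lra | field; lra].
  - intros u hu.
    assert (rpowm al u <= 1) by (apply rpowm_le_1; lra).
    assert (0 < rpowm al u) by (apply rpowm_pos; lra).
    assert (rpowm al u / u <= 1) by (apply Rcomplements.Rle_div_l; lra).
    nra.
Qed.

(** * The coefficients of the L1-2 approximation *)

(* Real-variable versions of [a_m], [b_m], [c_s] (middle) and [c_j] (last):
   the discrete coefficients are their values at [x = m + σ]. *)
Definition a_fun al x := rpow1 al x - rpow1 al (x - 1).
Definition b_fun al x := rpow2 al x - rpow2 al (x - 1) - (rpow1 al x + rpow1 al (x - 1)) / 2.
Definition cmid_fun al x := a_fun al x + b_fun al (x + 1) - b_fun al x.
Definition clast_fun al x := a_fun al x - b_fun al x.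

Section CoefficientFunctions.

Variable al : R.
Hypothesis hal : 0 < al < 1.

Lemma clast_fun_ge x : 1 < x -> (1 - al) * rpowm al x <= clast_fun al x.
Proof.
  intros hx.
  set (H := fun u => (3/2 + u) * rpow1 al (x + u) - (x + u) * rpow1 al (x + u) / (2 - al)
                     - (1 - al) * rpowm al x * (3/2 * u + u * u / 2)).
  assert (h : H (-1) <= H 0).
  { apply (nondecr_of_derive_nonneg H (fun u => (1 - al) * (3/2 + u) * (rpowm al (x + u) - rpowm al x)));
      [lra| |].
    - intros u hu. unfold H, rpowm, rpow1, Rpower. auto_derive; [lra | field; lra].
    - intros u hu. assert (rpowm al x <= rpowm al (x + u)) by (apply rpowm_antitone; lra).
      apply Rmult_le_pos; [apply Rmult_le_pos|]; lra. }
  enough (clast_fun al x - (1 - al) * rpowm al x = H 0 - H (-1)) by lra.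
  unfold H, clast_fun, a_fun, b_fun, rpow2.
  replace (x + -1) with (x - 1) by ring. rewrite !Rplus_0_r. field. lra.
Qed.

(* [cmid_fun x - cmid_fun (x + 1)] and [cmid_fun x - clast_fun (x + 1)] are sums of
   increments of the following three functions of [u]; their derivatives have a
   sign because [y^(-α)] is decreasing and convex. *)
Let incr1 x u :=
  (3/2 + u) * (rpow1 al (x + u) - rpow1 al (x + 1 + u)) - (rpow2 al (x + u) - rpow2 al (x + 1 + u)).
Let incr2 x u :=
  (1/2 - u) * (rpow1 al (x + u) - rpow1 al (x + 1 + u)) + rpow2 al (x + u) - rpow2 al (x + 1 + u)
  + (1/2 - u) * (rpow1 al (x + 1 - u) - rpow1 al (x + 2 - u)) - rpow2 al (x + 1 - u) + rpow2 al (x + 2 - u).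
Let incr3 x u :=
  (1/2 - u) * rpow1 al (x + u) + rpow2 al (x + u) + (1/2 - u) * rpow1 al (x + 1 - u) - rpow2 al (x + 1 - u).

Lemma incr1_mono x : 1 < x -> incr1 x (-1) <= incr1 x 0.
Proof.
  intros hx.
  apply (nondecr_of_derive_nonneg (incr1 x)
    (fun u => (1 - al) * (3/2 + u) * (rpowm al (x + u) - rpowm al (x + 1 + u)))); [lra| |].
  - intros u hu. unfold incr1, rpow2, rpowm, rpow1, Rpower.
    auto_derive; [repeat split; lra | unfold Rminus; field; lra].
  - intros u hu. assert (rpowm al (x + 1 + u) <= rpowm al (x + u)) by (apply rpowm_antitone; lra).
    apply Rmult_le_pos; [apply Rmult_le_pos|]; lra.
Qed.

Lemma incr2_mono x : 1 < x -> incr2 x 0 <= incr2 x (1/2).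
Proof.
  intros hx.
  apply (nondecr_of_derive_nonneg (incr2 x) (fun u => (1 - al) * (1/2 - u) *
     ((rpowm al (x + u) - rpowm al (x + 1 + u)) - (rpowm al (x + 1 - u) - rpowm al (x + 2 - u)))));
    [lra| |].
  - intros u hu. unfold incr2, rpow2, rpowm, rpow1, Rpower.
    auto_derive; [repeat split; lra | unfold Rminus; field; lra].
  - intros u hu.
    assert (rpowm al (x + 1 - u) - rpowm al (x + 1 - u + 1) <= rpowm al (x + u) - rpowm al (x + u + 1))
      by (apply rpowm_diff_antitone; lra).
    replace (x + 1 - u + 1) with (x + 2 - u) in * by ring.
    replace (x + u + 1) with (x + 1 + u) in * by ring.
    apply Rmult_le_pos; [apply Rmult_le_pos|]; lra.
Qed.

Lemma incr3_mono x : 1 < x -> incr3 x 0 <= incr3 x (1/2).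
Proof.
  intros hx.
  apply (nondecr_of_derive_nonneg (incr3 x)
    (fun u => (1 - al) * (1/2 - u) * (rpowm al (x + u) - rpowm al (x + 1 - u)))); [lra| |].
  - intros u hu. unfold incr3, rpow2, rpowm, rpow1, Rpower.
    auto_derive; [repeat split; lra | unfold Rminus; field; lra].
  - intros u hu. assert (rpowm al (x + 1 - u) <= rpowm al (x + u)) by (apply rpowm_antitone; lra).
    apply Rmult_le_pos; [apply Rmult_le_pos|]; lra.
Qed.

Lemma cmid_fun_antitone x : 1 < x -> cmid_fun al (x + 1) <= cmid_fun al x.
Proof.
  intros hx. pose proof (incr1_mono x hx). pose proof (incr2_mono x hx).
  enough (cmid_fun al x - cmid_fun al (x + 1)
          = incr1 x 0 - incr1 x (-1) + (incr2 x (1/2) - incr2 x 0)) by lra.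
  unfold cmid_fun, a_fun, b_fun, incr1, incr2, rpow2.
  replace (x + -1) with (x - 1) by ring. replace (x + 1 + -1) with x by ring.
  replace (x + 1 + 1) with (x + 2) by ring.
  replace (x + 1 - 1) with x by ring. replace (x + 2 - 1) with (x + 1) by ring.
  replace (x + 1 - 1/2) with (x + 1/2) by lra. replace (x + 2 - 1/2) with (x + 1 + 1/2) by lra.
  rewrite !Rplus_0_r, !Rminus_0_r. field. lra.
Qed.

Lemma clast_fun_le_cmid x : 1 < x -> clast_fun al (x + 1) <= cmid_fun al x.
Proof.
  intros hx. pose proof (incr1_mono x hx). pose proof (incr3_mono x hx).
  enough (cmid_fun al x - clast_fun al (x + 1)
          = incr1 x 0 - incr1 x (-1) + (incr3 x (1/2) - incr3 x 0)) by lra.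
  unfold cmid_fun, clast_fun, a_fun, b_fun, incr1, incr3, rpow2.
  replace (x + -1) with (x - 1) by ring. replace (x + 1 + -1) with x by ring.
  replace (x + 1 + 1) with (x + 2) by ring.
  replace (x + 1 - 1) with x by ring. replace (x + 1 - 1/2) with (x + 1/2) by lra.
  rewrite !Rplus_0_r, !Rminus_0_r. field. lra.
Qed.

Lemma clast_sub_b_fun_le s : 0 < s -> clast_fun al (1 + s) - b_fun al (1 + s) <= (1 - al) * rpowm al s.
Proof.
  intros hs.
  set (H := fun u => 2 * u * rpow1 al (s + u) - 2 * rpow2 al (s + u) - (1 - al) * rpowm al s * (u * u)).
  assert (h : H 1 <= H 0).
  { apply (nonincr_of_derive_nonpos H (fun u => 2 * u * (1 - al) * (rpowm al (s + u) - rpowm al s)));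
      [lra| |].
    - intros u hu. unfold H, rpow2, rpowm, rpow1, Rpower. auto_derive; [lra | unfold Rminus; field; lra].
    - intros u hu. assert (rpowm al (s + u) <= rpowm al s) by (apply rpowm_antitone; lra).
      assert (0 <= 2 * u * (1 - al)) by nra. nra. }
  enough (clast_fun al (1 + s) - b_fun al (1 + s) - (1 - al) * rpowm al s = H 1 - H 0) by lra.
  unfold H, clast_fun, a_fun, b_fun, rpow2.
  replace (1 + s - 1) with s by ring. replace (s + 1) with (1 + s) by ring.
  rewrite !Rplus_0_r. field. lra.
Qed.

Lemma clast_fun_le s : 0 < s -> clast_fun al (1 + s) <= (1 - al) * rpowm al s.
Proof.
  intros hs.
  set (H := fun u => (1/2 + u) * rpow1 al (s + u) - rpow2 al (s + u)
                     - (1 - al) * rpowm al s * (u / 2 + u * u / 2)).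
  assert (h : H 1 <= H 0).
  { apply (nonincr_of_derive_nonpos H (fun u => (1/2 + u) * (1 - al) * (rpowm al (s + u) - rpowm al s)));
      [lra| |].
    - intros u hu. unfold H, rpow2, rpowm, rpow1, Rpower. auto_derive; [lra | unfold Rminus; field; lra].
    - intros u hu. assert (rpowm al (s + u) <= rpowm al s) by (apply rpowm_antitone; lra).
      assert (0 <= (1/2 + u) * (1 - al)) by nra. nra. }
  enough (clast_fun al (1 + s) - (1 - al) * rpowm al s = H 1 - H 0) by lra.
  unfold H, clast_fun, a_fun, b_fun, rpow2.
  replace (1 + s - 1) with s by ring. replace (s + 1) with (1 + s) by ring.
  rewrite !Rplus_0_r. field. lra.
Qed.

Lemma b_fun_bounds s : 0 < s -> 0 <= b_fun al (2 + s) <= (1 - al) * al / 12.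
Proof.
  intros hs. set (m := 3/2 + s).
  (* [b_fun] at [2 + s] is the defect of the trapezoidal rule for [rpow1] on [[m - 1/2, m + 1/2]] *)
  set (H := fun v => rpow2 al (m + v) - rpow2 al (m - v) - v * (rpow1 al (m + v) + rpow1 al (m - v))).
  assert (E : b_fun al (2 + s) = H (1/2)).
  { unfold H, b_fun, m. replace (2 + s - 1) with (3/2 + s - 1/2) by lra.
    replace (2 + s) with (3/2 + s + 1/2) by lra. field. }
  assert (H0 : H 0 = 0) by (unfold H; rewrite Rplus_0_r, Rminus_0_r; ring).
  assert (dH : forall v, 0 <= v <= 1/2 ->
            is_derive H v ((1 - al) * v * (rpowm al (m - v) - rpowm al (m + v)))).
  { intros v hv. unfold H, rpow2, rpowm, rpow1, Rpower, m.
    auto_derive; [repeat split; lra | unfold Rminus; field; lra]. }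
  split.
  - rewrite E, <- H0.
    apply (nondecr_of_derive_nonneg H (fun v => (1 - al) * v * (rpowm al (m - v) - rpowm al (m + v))));
      [lra | exact dH|].
    intros v hv. assert (rpowm al (m + v) <= rpowm al (m - v)) by (apply rpowm_antitone; unfold m; lra).
    assert (0 <= (1 - al) * v) by nra. nra.
  - enough (H (1/2) - (1 - al) * al * (1/2)^3 * 2/3 <= H 0 - (1 - al) * al * 0^3 * 2/3)
      by (rewrite E; lra).
    apply (nonincr_of_derive_nonpos (fun v => H v - (1 - al) * al * v^3 * 2/3)
      (fun v => (1 - al) * v * (rpowm al (m - v) - rpowm al (m + v)) - 2 * (1 - al) * al * v * v));
      [lra| |].
    + intros v hv. apply (@is_derive_minus R_AbsRing R_NormedModule); [now apply dH|].
      auto_derive; [exact I | field].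
    + intros v hv.
      assert (rpowm al (m - v) - rpowm al (m + v) <= al * (m + v - (m - v)))
        by (apply rpowm_lipschitz; unfold m; lra).
      assert (0 <= (1 - al) * v) by nra. nra.
Qed.

End CoefficientFunctions.

Lemma a_coef_eq al sigma k : (1 <= k)%nat -> a_coef al sigma k = a_fun al (INR k + sigma).
Proof.
  intros hk. destruct k as [|k]; [lia|]. unfold a_coef, a_fun, rpow1.
  now replace (INR (S k) - 1 + sigma) with (INR (S k) + sigma - 1) by ring.
Qed.

Lemma b_coef_eq al sigma k : al < 2 -> 0 < sigma -> (1 <= k)%nat ->
  b_coef al sigma k = b_fun al (INR k + sigma).
Proof.
  intros ha hs hk. assert (1 <= INR k) by (apply (le_INR 1); lia).
  assert (pow2 : forall y, 0 < y -> Rpower y (2 - al) = y * Rpower y (1 - al)).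
  { intros y hy. replace (2 - al) with (1 + (1 - al)) by ring. now rewrite Rpower_plus, Rpower_1. }
  unfold b_coef, b_fun, rpow2, rpow1.
  replace (INR k - 1 + sigma) with (INR k + sigma - 1) by ring.
  rewrite !pow2 by lra. field. lra.
Qed.

Lemma c_coef_first al sigma j : al < 2 -> 0 < sigma -> (1 <= j)%nat ->
  c_coef al sigma j 0 = rpow1 al sigma + b_fun al (1 + sigma).
Proof.
  intros ha hs hj. destruct j; [lia|]. simpl c_coef.
  rewrite b_coef_eq by (auto; lia). reflexivity.
Qed.

Lemma c_coef_mid al sigma j k : al < 2 -> 0 < sigma -> (1 <= k)%nat -> (k < j)%nat ->
  c_coef al sigma j k = cmid_fun al (INR k + sigma).
Proof.
  intros ha hs hk hkj. destruct j as [|j]; [lia|]. destruct k as [|k]; [lia|].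
  unfold c_coef. rewrite (proj2 (Nat.eqb_neq (S k) (S j))) by lia.
  rewrite a_coef_eq, !b_coef_eq by (auto; lia). unfold cmid_fun.
  now replace (INR (S (S k)) + sigma) with (INR (S k) + sigma + 1) by (rewrite (S_INR (S k)); ring).
Qed.

Lemma c_coef_last al sigma j : al < 2 -> 0 < sigma -> (1 <= j)%nat ->
  c_coef al sigma j j = clast_fun al (INR j + sigma).
Proof.
  intros ha hs hj. destruct j as [|j]; [lia|].
  unfold c_coef. rewrite Nat.eqb_refl, a_coef_eq, b_coef_eq by (auto; lia). reflexivity.
Qed.

Section DiscreteCoefficients.

Variable al : R.
Hypothesis hal : 0 < al < 1.
Local Notation sigma := (1 - al / 2).
Local Notation c := (c_coef al sigma).

Lemma c_coef_last_ge j : (1 - al) * rpowm al (INR j + sigma) <= c j j.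
Proof.
  destruct j as [|j].
  - change (c 0%nat 0%nat) with (rpow1 al sigma). simpl INR. rewrite Rplus_0_l.
    rewrite (rpow1_rpowm al) by lra.
    assert (0 < rpowm al sigma) by (apply rpowm_pos; lra). nra.
  - rewrite c_coef_last by (lra || lia). apply clast_fun_ge; [exact hal|].
    assert (1 <= INR (S j)) by (apply (le_INR 1); lia). lra.
Qed.

Lemma c_coef_last_pos j : 0 < c j j.
Proof.
  eapply Rlt_le_trans; [|apply c_coef_last_ge].
  apply Rmult_lt_0_compat; [lra|]. apply rpowm_pos. pose proof (pos_INR j). lra.
Qed.

Lemma c_coef_succ_le j k : (1 <= k)%nat -> (k < j)%nat -> c j (S k) <= c j k.
Proof.
  intros hk hkj. assert (1 <= INR k) by (apply (le_INR 1); lia).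
  rewrite (c_coef_mid _ _ j k) by (lra || lia).
  destruct (Nat.eq_dec (S k) j) as [<-|ne].
  - rewrite c_coef_last by (lra || lia). rewrite S_INR.
    replace (INR k + 1 + sigma) with (INR k + sigma + 1) by ring.
    apply clast_fun_le_cmid; [exact hal | lra].
  - rewrite c_coef_mid by (lra || lia). rewrite S_INR.
    replace (INR k + 1 + sigma) with (INR k + sigma + 1) by ring.
    apply cmid_fun_antitone; [exact hal | lra].
Qed.

(* the condition on [c_0, c_1] in Alikhanov's lemma; it is where [σ = 1 - α/2] is needed *)
Lemma c_coef_alikhanov j : (1 <= j)%nat ->
  (1 - sigma) ^ 2 * c j 1%nat <= (c j 0%nat - c j 1%nat) * (2 * sigma - 1).
Proof.
  intros hj. set (s := sigma). set (P := rpowm al s).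
  assert (hs : 1/2 < s < 1) by (unfold s; lra).
  assert (hP : 1 <= P) by (apply rpowm_ge_1; lra).
  assert (gap : al / 2 * P <= c j 0%nat - clast_fun al (1 + s)).
  { rewrite c_coef_first by (lra || lia). fold s.
    pose proof (clast_sub_b_fun_le al hal s ltac:(lra)) as h.
    rewrite (rpow1_rpowm al s) by lra. fold P in h |- *. unfold s in *. nra. }
  assert (hC : clast_fun al (1 + s) <= (1 - al) * P) by (apply clast_fun_le; [exact hal | lra]).
  assert (arith : forall b, 0 <= b <= (1 - al) * al / 12 ->
            c j 1%nat = clast_fun al (1 + s) + b ->
            (al / 2) ^ 2 * c j 1%nat <= (c j 0%nat - c j 1%nat) * (1 - al)).
  { intros b hb ->.
    assert ((al/2)^2 * clast_fun al (1 + s) <= (al/2)^2 * ((1 - al) * P)) by (apply Rmult_le_compat_l; nra).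
    assert (al / 2 * P * (1 - al) <= (c j 0%nat - clast_fun al (1 + s)) * (1 - al))
      by (apply Rmult_le_compat_r; lra).
    assert (al / 4 * (1 - al) <= (al / 2 - (al / 2) ^ 2) * P * (1 - al)).
    { assert (0 <= (al / 2 - (al / 2) ^ 2) * (1 - al)) by nra. nra. }
    nra. }
  replace (1 - s) with (al / 2) by (unfold s; field). replace (2 * s - 1) with (1 - al) by (unfold s; field).
  destruct (Nat.eq_dec j 1) as [->|ne].
  - apply (arith 0); [nra|]. rewrite c_coef_last by (lra || lia). simpl INR. now rewrite Rplus_0_r.
  - apply (arith (b_fun al (2 + s))); [apply b_fun_bounds; [exact hal | lra]|].
    rewrite c_coef_mid by (lra || lia). simpl INR. fold s.
    unfold cmid_fun, clast_fun. replace (1 + s + 1) with (2 + s) by ring. ring.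
Qed.

Lemma c_coef_last_le j k : (1 <= k <= j)%nat -> c j j <= c j k.
Proof.
  intros hk. remember (j - k)%nat as d eqn:hd. revert k hk hd.
  induction d as [|d IH]; intros k hk hd.
  - replace k with j by lia. lra.
  - apply Rle_trans with (c j (S k)); [apply IH; lia | apply c_coef_succ_le; lia].
Qed.

Lemma c_coef_antitone j k : (k < j)%nat -> c j (S k) <= c j k.
Proof.
  intros hk. destruct k as [|k]; [|apply c_coef_succ_le; lia].
  pose proof (c_coef_alikhanov j ltac:(lia)) as h.
  assert (0 < c j 1%nat) by (eapply Rlt_le_trans; [apply c_coef_last_pos | apply c_coef_last_le; lia]).
  assert (0 <= (1 - sigma) ^ 2 * c j 1%nat) by (apply Rmult_le_pos; [apply pow2_ge_0 | lra]).
  enough (0 <= c j 0%nat - c j 1%nat) by lra.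
  apply Rmult_le_reg_r with (2 * sigma - 1); lra.
Qed.

Lemma c_coef_0_pos j : 0 < c j 0%nat.
Proof.
  destruct j as [|j]; [apply c_coef_last_pos|].
  eapply Rlt_le_trans; [apply (c_coef_last_pos (S j))|].
  apply Rle_trans with (c (S j) 1%nat); [apply c_coef_last_le; lia | apply c_coef_antitone; lia].
Qed.

End DiscreteCoefficients.

(** * Alikhanov's inequality and a discrete Grönwall lemma *)

Lemma alikhanov_ineq (c : nat -> R) (j : nat) (sg : R) (v : nat -> R) :
  1/2 <= sg <= 1 ->
  (forall k, (1 <= k)%nat -> (k < j)%nat -> c (S k) <= c k) ->
  0 <= c j ->
  ((1 <= j)%nat -> (1 - sg) ^ 2 * c 1%nat <= (c 0%nat - c 1%nat) * (2 * sg - 1)) ->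
  1/2 * rsum (S j) (fun s => c (j - s)%nat * (v (S s) ^ 2 - v s ^ 2)) <=
  (sg * v (S j) + (1 - sg) * v j) * rsum (S j) (fun s => c (j - s)%nat * (v (S s) - v s)).
Proof.
  intros hsg hmono hcj h01.
  (* with [A s = v (j+1) - v s] and [F X = X^2/2 - (1-σ) A j X], the difference of the
     two sides is [Σ c_(j-s) (F (A s) - F (A (s+1)))], which is summed by parts *)
  set (A := fun s => v (S j) - v s).
  set (F := fun X => X * X / 2 - (1 - sg) * A j * X).
  set (K := (1 - sg) ^ 2 * (A j * A j) / 2).
  assert (F_ge : forall X, - K <= F X).
  { intros X. unfold F, K. pose proof (Rle_0_sqr (X - (1 - sg) * A j)). unfold Rsqr in *. nra. }
  set (Sm := fun n => rsum n (fun s => c (j - s)%nat * (F (A s) - F (A (S s))))).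
  assert (diff : forall n,
    (sg * v (S j) + (1 - sg) * v j) * rsum n (fun s => c (j - s)%nat * (v (S s) - v s))
    - 1/2 * rsum n (fun s => c (j - s)%nat * (v (S s) ^ 2 - v s ^ 2)) = Sm n).
  { induction n as [|n IH]; [unfold Sm; simpl; ring|].
    unfold Sm in *. rewrite !rsum_S, <- IH. unfold F, A. field. }
  enough (0 <= Sm (S j)) by (specialize (diff (S j)); lra).
  set (T := fun n => Sm n + c (j - n)%nat * F (A n)).
  assert (T_S : forall n, T (S n) = T n + (c (j - S n)%nat - c (j - n)%nat) * F (A (S n))).
  { intros n. unfold T, Sm. rewrite !rsum_S. ring. }
  assert (Sm_T : Sm (S j) = T j).
  { unfold T, Sm. rewrite !rsum_S. rewrite Nat.sub_diag.
    replace (F (A (S j))) with 0 by (unfold F, A; field). ring. }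
  assert (F_Aj : F (A j) = (sg - 1/2) * (A j * A j)) by (unfold F; field).
  rewrite Sm_T. destruct j as [|j].
  - unfold T, Sm. rewrite Nat.sub_0_r, F_Aj. simpl rsum.
    rewrite Rplus_0_l. apply Rmult_le_pos; [exact hcj|].
    apply Rmult_le_pos; [lra | apply Rle_0_sqr].
  - assert (partial : forall n, (n <= j)%nat -> - K * c (S j - n)%nat <= T n).
    { induction n as [|n IH]; intros hn.
      - unfold T, Sm. simpl rsum. rewrite Nat.sub_0_r.
        specialize (F_ge (A 0%nat)). nra.
      - rewrite T_S. specialize (IH ltac:(lia)).
        assert (c (S j - n)%nat <= c (S j - S n)%nat).
        { replace (S j - n)%nat with (S (S j - S n)) by lia. apply hmono; lia. }
        specialize (F_ge (A (S n))). nra. }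
    specialize (partial j (Nat.le_refl _)).
    rewrite T_S. replace (S j - j)%nat with 1%nat in * by lia. rewrite Nat.sub_diag, F_Aj.
    specialize (h01 ltac:(lia)).
    assert (0 <= A (S j) * A (S j)) by nra.
    unfold K in partial. nra.
Qed.

(* [w (j+1) <= w 0 + P] by strong induction: the left-hand side of the hypothesis,
   summed by parts, is [c_0 w_(j+1) - c_j w_0 - Σ (c_(j-s) - c_(j-s+1)) w_s]. *)
Lemma discrete_gronwall (c : nat -> nat -> R) (w : nat -> R) (P : R) (M : nat) :
  (forall j k, (k < j)%nat -> c j (S k) <= c j k) -> (forall j, 0 < c j 0%nat) ->
  (forall j, (j < M)%nat -> rsum (S j) (fun s => c j (j - s)%nat * (w (S s) - w s)) <= c j j * P) ->
  forall j, (j < M)%nat -> w (S j) <= w 0%nat + P.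
Proof.
  intros hmono hpos hB.
  enough (strong : forall m j, (j <= m)%nat -> (j < M)%nat -> w (S j) <= w 0%nat + P)
    by (intros j hj; now apply (strong j j)).
  induction m as [|m IH]; intros j hjm hjM.
  - replace j with 0%nat in * by lia. specialize (hB 0%nat hjM). simpl in hB.
    specialize (hpos 0%nat).
    apply Rmult_le_reg_l with (c 0%nat 0%nat); nra.
  - destruct (Nat.le_gt_cases j m) as [hle|hgt]; [now apply IH|].
    assert (j = S m) as -> by lia. set (j := S m).
    set (W := fun s => w s - w 0%nat).
    set (T := fun n => rsum n (fun s => c j (j - s)%nat * (w (S s) - w s)) - c j (j - n)%nat * W n).
    assert (partial : forall n, (n <= j)%nat -> - (c j (j - n)%nat - c j j) * P <= T n).
    { induction n as [|n IHn]; intros hn.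
      - unfold T, W, j. simpl. apply Req_le. ring.
      - specialize (IHn ltac:(lia)).
        assert (W (S n) <= P) by (unfold W; enough (w (S n) <= w 0%nat + P) by lra; apply IH; lia).
        assert (c j (j - n)%nat <= c j (j - S n)%nat).
        { replace (j - n)%nat with (S (j - S n)) by lia. apply hmono; lia. }
        assert (T (S n) = T n - (c j (j - S n)%nat - c j (j - n)%nat) * W (S n))
          by (unfold T, W; rewrite !rsum_S; ring).
        nra. }
    specialize (partial j (Nat.le_refl _)). rewrite Nat.sub_diag in partial.
    assert (rsum (S j) (fun s => c j (j - s)%nat * (w (S s) - w s)) = T j + c j 0%nat * W (S j))
      by (unfold T, W; rewrite !rsum_S; rewrite Nat.sub_diag; ring).
    specialize (hB j hjM). specialize (hpos j). unfold W in *.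
    apply Rmult_le_reg_l with (c j 0%nat); nra.
Qed.

(** * The spatial operators *)

Lemma Hh_lin sg (A B : nat -> R) i :
  Hh (fun m => sg * A m + (1 - sg) * B m) i = sg * Hh A i + (1 - sg) * Hh B i.
Proof. unfold Hh. field. Qed.

Definition diff_sq_sum n (v : nat -> R) := rsum (S n) (fun i => (v (S i) - v i) * (v (S i) - v i)).

Section ZeroBoundary.

Variables (n : nat) (v : nat -> R).
Hypotheses (v0 : v 0%nat = 0) (vN : v (S n) = 0).

Lemma Hh_sq_sum_le : rsum n (fun i => Hh v (S i) * Hh v (S i)) <= rsum n (fun i => v (S i) * v (S i)).
Proof.
  set (Q := fun i => v i * v i).
  (* convexity of the square: [(H_h v_i)^2 <= (Q_(i-1) + 10 Q_i + Q_(i+1)) / 12] *)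
  apply Rle_trans with (rsum n (fun i => (Q i + 10 * Q (S i) + Q (S (S i))) / 12)).
  - apply rsum_le. intros i hi. unfold Hh, Q. simpl Nat.pred.
    pose proof (Rle_0_sqr (v i - v (S i))). pose proof (Rle_0_sqr (v (S (S i)) - v (S i))).
    pose proof (Rle_0_sqr (v i - v (S (S i)))). unfold Rsqr in *. nra.
  - unfold Rdiv. rewrite rsum_scal_r, !rsum_plus, rsum_scal_l, rsum_shift2, (rsum_shift n Q).
    assert (Q 0%nat = 0) by (unfold Q; rewrite v0; ring).
    assert (Q (S n) = 0) by (unfold Q; rewrite vN; ring).
    assert (0 <= Q n) by apply Rle_0_sqr. assert (0 <= Q 1%nat) by apply Rle_0_sqr.
    change (rsum n (fun i => v (S i) * v (S i))) with (rsum n (fun i => Q (S i))). lra.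
Qed.

Lemma discrete_poincare :
  rsum n (fun i => v (S i) * v (S i)) <= INR (S n) * INR (S n) / 2 * diff_sq_sum n v.
Proof.
  assert (0 <= diff_sq_sum n v) by (apply rsum_nonneg; intros; apply Rle_0_sqr).
  apply Rle_trans with (rsum n (fun i => INR (S i) * diff_sq_sum n v)).
  - apply rsum_le. intros i hi. rewrite (rsum_telescope v i), v0, Rplus_0_l.
    apply Rle_trans with (INR (S i) * rsum (S i) (fun k => (v (S k) - v k) * (v (S k) - v k))).
    + apply rsum_Cauchy_Schwarz.
    + apply Rmult_le_compat_l; [apply pos_INR|].
      apply rsum_le_length; [lia | intros; apply Rle_0_sqr].
  - rewrite rsum_scal_r, rsum_INR_S, S_INR.
    assert (0 <= INR n) by apply pos_INR. nra.
Qed.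

Lemma dxx_Hh_coercive h : 0 < h ->
  2 / (3 * h * h) * diff_sq_sum n v <= rsum n (fun i => - dxx h v (S i) * Hh v (S i)).
Proof.
  intros hh.
  set (D := fun i => v (S i) - v i).
  assert (e : forall i, - dxx h v (S i) * Hh v (S i) =
        ((D i - D (S i)) * v (S i) - (D i - D (S i)) * (D i - D (S i)) / 12) / (h * h)).
  { intros i. unfold dxx, Hh, D. simpl Nat.pred. field. lra. }
  rewrite (rsum_ext _ _ _ (fun i _ => e i)). unfold Rdiv at 2.
  rewrite rsum_scal_r, rsum_minus, (rsum_by_parts n v D) by reflexivity.
  rewrite v0, vN. change (rsum (S n) (fun i => D i * D i)) with (diff_sq_sum n v).
  assert (rsum n (fun i => (D i - D (S i)) * (D i - D (S i)) / 12) <= diff_sq_sum n v / 3).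
  { apply Rle_trans with (rsum n (fun i => (D i * D i + D (S i) * D (S i)) / 6)).
    - apply rsum_le. intros i _. pose proof (Rle_0_sqr (D i + D (S i))). unfold Rsqr in *. nra.
    - unfold Rdiv. rewrite rsum_scal_r, rsum_plus.
      pose proof (rsum_shift n (fun i => D i * D i)) as sh. cbv beta in sh.
      change (diff_sq_sum n v) with (rsum n (fun i => D i * D i) + D n * D n).
      pose proof (Rle_0_sqr (D 0%nat)). pose proof (Rle_0_sqr (D n)). unfold Rsqr in *. lra. }
  replace (2 / (3 * h * h) * diff_sq_sum n v) with ((diff_sq_sum n v - diff_sq_sum n v / 3) * / (h * h))
    by (field; lra).
  apply Rmult_le_compat_r; [apply Rlt_le, Rinv_0_lt_compat; nra | lra].
Qed.

End ZeroBoundary.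

Lemma Hh_norm_le_dxx_Hh (N : nat) (l : R) (v : nat -> R) : (1 <= N)%nat -> 0 < l ->
  v 0%nat = 0 -> v N = 0 ->
  4 / (3 * l ^ 2) * norm0_sq N (l / INR N) (Hh v)
  <= rsum (N - 1) (fun i => - dxx (l / INR N) v (S i) * Hh v (S i) * (l / INR N)).
Proof.
  intros hN hl v0 vN.
  destruct N as [|n]; [lia|]. replace (S n - 1)%nat with n by lia.
  set (h := l / INR (S n)).
  assert (hNp : 0 < INR (S n)) by (apply lt_0_INR; lia).
  assert (hh : 0 < h) by (apply Rdiv_lt_0_compat; lra).
  pose proof (Hh_sq_sum_le n v v0 vN). pose proof (discrete_poincare n v v0).
  pose proof (dxx_Hh_coercive n v v0 vN h hh) as coer.
  unfold norm0_sq. replace (S n - 1)%nat with n by lia. rewrite !rsum_scal_r.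
  rewrite <- Rmult_assoc. apply Rmult_le_compat_r; [lra|].
  assert (e : 4 / (3 * l ^ 2) * (INR (S n) * INR (S n) / 2) = 2 / (3 * h * h)) by (unfold h; field; lra).
  assert (0 < 4 / (3 * l ^ 2)) by (apply Rdiv_lt_0_compat; nra).
  eapply Rle_trans; [|exact coer]. rewrite <- e, Rmult_assoc.
  apply Rmult_le_compat_l; lra.
Qed.

(** * Two facts on the Gamma function *)

Lemma sup_approx (P : R -> Prop) (F : R -> R) (B : R) :
  (exists x, P x) -> (forall x, P x -> F x <= B) ->
  exists L, (forall x, P x -> F x <= L) /\ (forall eps, 0 < eps -> exists x, P x /\ L - eps < F x).
Proof.
  intros [x0 hx0] hB.
  set (E := fun y => exists x, P x /\ y = F x).
  destruct (completeness E) as [L [hub hlub]].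
  - exists B. intros y [x [hx ->]]. now apply hB.
  - exists (F x0), x0. now split.
  - exists L. split; [intros x hx; apply hub; now exists x|].
    intros eps heps. apply NNPP. intros hn.
    enough (L <= L - eps) by lra. apply hlub.
    intros y [x [hx ->]]. apply Rnot_lt_le. intros hlt. apply hn. now exists x.
Qed.

Lemma filterlim_lincomb {T : Type} (F : (T -> Prop) -> Prop) {FF : Filter F}
  (u v : T -> R) (a lu lv : R) :
  filterlim u F (locally lu) -> filterlim v F (locally lv) ->
  filterlim (fun t => a * u t - v t) F (locally (a * lu - lv)).
Proof.
  intros hu hv.
  apply (filterlim_comp_2 (G := locally (a * lu)) (H := locally (- lv))
           (fun t => a * u t) (fun t => - v t) Rplus).
  - exact (filterlim_comp _ _ _ u _ _ _ _ hu (filterlim_scal_r (V := R_NormedModule) a lu)).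
  - exact (filterlim_comp _ _ _ v _ _ _ _ hv (filterlim_opp (V := R_NormedModule) lv)).
  - exact (filterlim_plus (V := R_NormedModule) (a * lu) (- lv)).
Qed.

Lemma at_right_0_pos : at_right 0 (fun a => 0 < a).
Proof. exists (mkposreal 1 Rlt_0_1). now intros y _ hy. Qed.

Lemma is_RInt_gen_of_primitive (F g : R -> R) (la lb : R) :
  (forall x, 0 < x -> is_derive F x (g x)) -> (forall x, 0 < x -> continuous g x) ->
  filterlim F (at_right 0) (locally la) -> filterlim F (Rbar_locally p_infty) (locally lb) ->
  is_RInt_gen g (at_right 0) (Rbar_locally p_infty) (lb - la).
Proof.
  intros hd hc h0 hinf.
  assert (pos : filter_prod (at_right 0) (Rbar_locally p_infty)
                  (fun ab => 0 < Rmin (fst ab) (snd ab))).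
  { apply Filter_prod with (fun a => 0 < a) (fun b => 0 < b);
      [exact at_right_0_pos | now exists 0 | intros a b ha hb; now apply Rmin_glb_lt]. }
  apply (is_RInt_gen_ext (Derive F)).
  - eapply filter_imp; [|exact pos]. intros ab hab x hx.
    apply is_derive_unique, hd. lra.
  - apply is_RInt_gen_Derive; try assumption.
    + eapply filter_imp; [|exact pos]. intros ab hab x hx. exists (g x). apply hd. lra.
    + eapply filter_imp; [|exact pos]. intros ab hab x hx.
      apply (continuous_ext_loc _ g); [|apply hc; lra].
      exists (mkposreal x ltac:(simpl; lra)). intros y hy.
      change (Rabs (y - x) < x) in hy. apply Rabs_lt_between in hy.
      symmetry. apply is_derive_unique, hd. lra.
Qed.

Lemma exp_opp_le_1 t : 0 <= t -> exp (- t) <= 1.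
Proof.
  intros ht. rewrite <- exp_0. destruct (Req_dec t 0) as [->|hne].
  - rewrite Ropp_0. lra.
  - left. apply exp_increasing. lra.
Qed.

Definition gint al t := Rpower t (- al) * exp (- t).
Definition gprim al x := RInt (gint al) 1 x.

Section GammaIntegrand.

Variable al : R.
Hypothesis hal : 0 < al < 1.

Lemma gint_rpowm t : 0 < t -> gint al t = rpowm al t * exp (- t).
Proof. intros ht. unfold gint. now rewrite rpowm_Rpower, Rpower_Ropp. Qed.

Lemma gint_pos t : 0 < gint al t.
Proof. apply Rmult_lt_0_compat; [apply Rpower_pos | apply exp_pos]. Qed.

Lemma gint_continuous t : 0 < t -> continuous (gint al) t.
Proof.
  intros ht. apply (@ex_derive_continuous R_AbsRing R_NormedModule).
  unfold gint, Rpower. auto_derive. lra.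
Qed.

Lemma is_derive_gprim x : 0 < x -> is_derive (gprim al) x (gint al x).
Proof.
  intros hx. apply (is_derive_RInt (V := R_CompleteNormedModule) (gint al) (gprim al) 1);
    [|now apply gint_continuous].
  exists (mkposreal (x / 2) ltac:(simpl; lra)). intros y hy.
  change (Rabs (y - x) < x / 2) in hy. apply Rabs_lt_between in hy.
  apply (@RInt_correct R_CompleteNormedModule), ex_RInt_continuous.
  intros z hz. apply gint_continuous.
  assert (0 < Rmin 1 y) by (apply Rmin_glb_lt; lra). lra.
Qed.

Lemma gprim_le x y : 0 < x <= y -> gprim al x <= gprim al y.
Proof.
  intros h. apply (nondecr_of_derive_nonneg (gprim al) (gint al)); [lra| |].
  - intros u hu. apply is_derive_gprim. lra.
  - intros u _. left. apply gint_pos.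
Qed.

Lemma gprim_1 : gprim al 1 = 0.
Proof. apply (RInt_point (V := R_CompleteNormedModule)). Qed.

(* on [[1, +oo)] the integrand is at most [exp (- t)] *)
Lemma gprim_le_1 x : 1 <= x -> gprim al x <= 1.
Proof.
  intros hx.
  assert (h : gprim al x + exp (- x) <= gprim al 1 + exp (- 1)).
  { apply (nonincr_of_derive_nonpos (fun t => gprim al t + exp (- t))
      (fun t => gint al t + - exp (- t))); [lra| |].
    - intros u hu. apply (@is_derive_plus R_AbsRing R_NormedModule); [apply is_derive_gprim; lra|].
      auto_derive; [exact I | ring].
    - intros u hu. rewrite gint_rpowm by lra.
      assert (rpowm al u <= 1) by (apply rpowm_le_1; lra).
      pose proof (exp_pos (- u)). nra. }
  rewrite gprim_1 in h. pose proof (exp_pos (- x)).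
  assert (exp (-1) <= 1) by (rewrite <- exp_0; left; apply exp_increasing; lra). lra.
Qed.

(* on [(0, 1]] the integrand is at most [t^(-α)] *)
Lemma gprim_ge x : 0 < x <= 1 -> - / (1 - al) <= gprim al x.
Proof.
  intros hx.
  assert (h : gprim al 1 - Rpower 1 (1 - al) / (1 - al) <= gprim al x - Rpower x (1 - al) / (1 - al)).
  { apply (nonincr_of_derive_nonpos (fun t => gprim al t - Rpower t (1 - al) / (1 - al))
      (fun t => gint al t - rpowm al t)); [lra| |].
    - intros u hu. apply (@is_derive_minus R_AbsRing R_NormedModule); [apply is_derive_gprim; lra|].
      unfold rpowm, rpow1, Rpower. auto_derive; [lra | field; lra].
    - intros u hu. rewrite gint_rpowm by lra.
      assert (0 < rpowm al u) by (apply rpowm_pos; lra).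
      pose proof (exp_opp_le_1 u ltac:(lra)). nra. }
  rewrite gprim_1, Rpower_base_1 in h.
  assert (0 <= Rpower x (1 - al) / (1 - al)) by (apply Rle_mult_inv_pos; [left; apply Rpower_pos | lra]).
  unfold Rdiv in *. lra.
Qed.

Lemma gprim_lim_p_infty :
  exists L, (forall x, 1 <= x -> gprim al x <= L) /\ filterlim (gprim al) (Rbar_locally p_infty) (locally L).
Proof.
  destruct (sup_approx (fun x => 1 <= x) (gprim al) 1) as [L [hub happ]];
    [exists 1; lra | exact gprim_le_1 |].
  exists L. split; [exact hub|].
  apply filterlim_locally. intros eps.
  destruct (happ eps (cond_pos eps)) as [x0 [hx0 hlt]].
  exists x0. intros x hx. change (Rabs (gprim al x - L) < eps). apply Rabs_lt_between.
  assert (gprim al x0 <= gprim al x) by (apply gprim_le; lra).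
  assert (gprim al x <= L) by (apply hub; lra). lra.
Qed.

Lemma gprim_lim_0 :
  exists L, (forall x, 0 < x <= 1 -> L <= gprim al x) /\ filterlim (gprim al) (at_right 0) (locally L).
Proof.
  destruct (sup_approx (fun x => 0 < x <= 1) (fun x => - gprim al x) (/ (1 - al))) as [L [hub happ]].
  - exists 1. lra.
  - intros x hx. pose proof (gprim_ge x hx). lra.
  - exists (- L). split; [intros x hx; specialize (hub x hx); lra|].
    apply filterlim_locally. intros eps.
    destruct (happ eps (cond_pos eps)) as [x0 [hx0 hlt]].
    exists (mkposreal x0 ltac:(simpl; lra)). intros x hx hpos.
    change (Rabs (x - 0) < x0) in hx. rewrite Rminus_0_r, Rabs_pos_eq in hx by lra.
    change (Rabs (gprim al x - - L) < eps). apply Rabs_lt_between.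
    assert (gprim al x <= gprim al x0) by (apply gprim_le; lra).
    assert (- gprim al x <= L) by (apply hub; lra). lra.
Qed.

Definition gint2 t := Rpower t (1 - al) * exp (- t).

Lemma gint2_lim_0 : filterlim gint2 (at_right 0) (locally 0).
Proof.
  apply filterlim_locally. intros eps.
  exists (mkposreal (Rpower eps (/ (1 - al))) (Rpower_pos _ _)). intros t ht hpos.
  change (Rabs (t - 0) < Rpower eps (/ (1 - al))) in ht. rewrite Rminus_0_r, Rabs_pos_eq in ht by lra.
  change (Rabs (gint2 t - 0) < eps). rewrite Rminus_0_r. unfold gint2.
  assert (Rpower t (1 - al) < eps).
  { apply Rlt_le_trans with (Rpower (Rpower eps (/ (1 - al))) (1 - al)); [apply Rlt_Rpower_l; lra|].
    rewrite Rpower_mult. replace (/ (1 - al) * (1 - al)) with 1 by (field; lra).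
    rewrite Rpower_1; [lra | apply cond_pos]. }
  pose proof (exp_opp_le_1 t ltac:(lra)). pose proof (Rpower_pos t (1 - al)). pose proof (exp_pos (- t)).
  rewrite Rabs_pos_eq by (apply Rmult_le_pos; lra). nra.
Qed.

(* [t^(1-α) <= t] and [exp t >= t^2 / 4] for [t >= 1] *)
Lemma gint2_lim_p_infty : filterlim gint2 (Rbar_locally p_infty) (locally 0).
Proof.
  apply filterlim_locally. intros eps. pose proof (cond_pos eps) as he.
  exists (Rmax 1 (4 / eps)). intros t ht.
  assert (1 < t) by (pose proof (Rmax_l 1 (4 / eps)); lra).
  assert (ht4 : 4 / eps < t) by (pose proof (Rmax_r 1 (4 / eps)); lra).
  change (Rabs (gint2 t - 0) < eps). rewrite Rminus_0_r. unfold gint2.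
  pose proof (exp_pos t). pose proof (Rpower_pos t (1 - al)).
  rewrite Rabs_pos_eq by (apply Rmult_le_pos; [lra | left; apply exp_pos]).
  assert (Rpower t (1 - al) <= t) by (rewrite <- (Rpower_1 t) at 2 by lra; apply Rle_Rpower; lra).
  assert (t * t / 4 < exp t).
  { replace t with (t / 2 + t / 2) at 3 by field. rewrite exp_plus.
    pose proof (exp_ineq1 (t / 2) ltac:(lra)). nra. }
  assert (4 < eps * t).
  { apply (Rmult_lt_compat_l eps) in ht4; [|exact he].
    replace (eps * (4 / eps)) with 4 in ht4 by (field; lra). exact ht4. }
  rewrite exp_Ropp.
  apply Rle_lt_trans with (t * / exp t);
    [apply Rmult_le_compat_r; [left; apply Rinv_0_lt_compat|]; lra|].
  apply (Rcomplements.Rlt_div_l t eps (exp t)); [lra|]. nra.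
Qed.

Lemma is_derive_gint2 t : 0 < t -> is_derive gint2 t ((1 - al) * gint al t - gint2 t).
Proof.
  intros ht. rewrite gint_rpowm by exact ht.
  unfold gint2, rpowm, rpow1, Rpower. auto_derive; [lra | field; lra].
Qed.

Lemma gint2_continuous t : 0 < t -> continuous gint2 t.
Proof.
  intros ht. apply (@ex_derive_continuous R_AbsRing R_NormedModule).
  exists ((1 - al) * gint al t - gint2 t). now apply is_derive_gint2.
Qed.

End GammaIntegrand.

Lemma Gamma_1_minus_as_limits al : 0 < al < 1 -> exists L0 L1,
  L0 < L1 /\ filterlim (gprim al) (at_right 0) (locally L0) /\
  filterlim (gprim al) (Rbar_locally p_infty) (locally L1) /\ Gamma (1 - al) = L1 - L0.
Proof.
  intros hal.
  destruct (gprim_lim_0 al hal) as [L0 [h0 lim0]].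
  destruct (gprim_lim_p_infty al hal) as [L1 [h1 lim1]].
  exists L0, L1. repeat split; [|exact lim0 | exact lim1|].
  - (* [L0 <= gprim (1/2) < gprim 1 <= L1] *)
    destruct (MVT_gen (gprim al) (1/2) 1 (gint al)) as [c [hc e]].
    + intros x hx. apply is_derive_gprim. rewrite Rmin_left in hx; lra.
    + intros x hx. rewrite Rmin_left, Rmax_right in hx by lra.
      apply continuity_pt_filterlim, (@ex_derive_continuous R_AbsRing R_NormedModule).
      exists (gint al x). apply is_derive_gprim. lra.
    + pose proof (gint_pos al c). specialize (h0 (1/2) ltac:(lra)). specialize (h1 1 ltac:(lra)). nra.
  - unfold Gamma. replace (1 - al - 1) with (- al) by ring.
    apply (is_RInt_gen_unique (V := R_CompleteNormedModule)).
    apply (is_RInt_gen_of_primitive (gprim al)); [apply is_derive_gprim | apply gint_continuous | |];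
      assumption.
Qed.

Lemma Gamma_1_minus_pos al : 0 < al < 1 -> 0 < Gamma (1 - al).
Proof. intros hal. destruct (Gamma_1_minus_as_limits al hal) as [L0 [L1 [hlt [_ [_ ->]]]]]. lra. Qed.

Lemma Gamma_2_minus al : 0 < al < 1 -> Gamma (2 - al) = (1 - al) * Gamma (1 - al).
Proof.
  intros hal. destruct (Gamma_1_minus_as_limits al hal) as [L0 [L1 [_ [lim0 [lim1 ->]]]]].
  unfold Gamma. replace (2 - al - 1) with (1 - al) by ring.
  apply (is_RInt_gen_unique (V := R_CompleteNormedModule)).
  replace ((1 - al) * (L1 - L0)) with (((1 - al) * L1 - 0) - ((1 - al) * L0 - 0)) by ring.
  apply (is_RInt_gen_of_primitive (fun t => (1 - al) * gprim al t - gint2 al t)).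
  - intros x hx. change (is_derive (fun t => (1 - al) * gprim al t - gint2 al t) x (gint2 al x)).
    replace (gint2 al x) with ((1 - al) * gint al x - ((1 - al) * gint al x - gint2 al x)) by ring.
    apply (@is_derive_minus R_AbsRing R_NormedModule); [|now apply is_derive_gint2].
    apply is_derive_scal, is_derive_gprim; assumption.
  - now apply gint2_continuous.
  - apply (filterlim_lincomb _ _ _ _ _ _ lim0). now apply gint2_lim_0.
  - apply (filterlim_lincomb _ _ _ _ _ _ lim1). now apply gint2_lim_p_infty.
Qed.

(** * The energy estimate *)

Lemma frac_diff_sq_le (c : nat -> R) (j : nat) (C tau sg : R) (v : nat -> R) :
  0 < C -> 0 < tau -> 1/2 <= sg <= 1 ->
  (forall k, (1 <= k)%nat -> (k < j)%nat -> c (S k) <= c k) -> 0 <= c j ->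
  ((1 <= j)%nat -> (1 - sg) ^ 2 * c 1%nat <= (c 0%nat - c 1%nat) * (2 * sg - 1)) ->
  C / (2 * tau) * rsum (S j) (fun s => c (j - s)%nat * (v (S s) * v (S s) - v s * v s))
  <= (sg * v (S j) + (1 - sg) * v j) * (C * rsum (S j) (fun s => c (j - s)%nat * ((v (S s) - v s) / tau))).
Proof.
  intros hC htau hsg hmono hcj h01.
  pose proof (alikhanov_ineq c j sg v hsg hmono hcj h01) as hal.
  assert (e1 : rsum (S j) (fun s => c (j - s)%nat * ((v (S s) - v s) / tau))
               = / tau * rsum (S j) (fun s => c (j - s)%nat * (v (S s) - v s))).
  { rewrite <- rsum_scal_l. apply rsum_ext. intros s _. field. lra. }
  assert (e2 : rsum (S j) (fun s => c (j - s)%nat * (v (S s) * v (S s) - v s * v s))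
               = rsum (S j) (fun s => c (j - s)%nat * (v (S s) ^ 2 - v s ^ 2))).
  { apply rsum_ext. intros s _. ring. }
  rewrite e1, e2.
  replace (C / (2 * tau)) with (C / tau * (1 / 2)) by (field; lra).
  replace ((sg * v (S j) + (1 - sg) * v j) * (C * (/ tau * rsum (S j) (fun s => c (j - s)%nat * (v (S s) - v s)))))
    with (C / tau * ((sg * v (S j) + (1 - sg) * v j) * rsum (S j) (fun s => c (j - s)%nat * (v (S s) - v s))))
    by (field; lra).
  rewrite Rmult_assoc. apply Rmult_le_compat_l; [apply Rlt_le, Rdiv_lt_0_compat|]; lra.
Qed.

Lemma norm0_sq_weighted_diff N h (c : nat -> R) j K (Y : nat -> nat -> R) :
  rsum (N - 1) (fun i => K * rsum (S j) (fun s => c (j - s)%nat *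
      (Hh (Y (S s)) (S i) * Hh (Y (S s)) (S i) - Hh (Y s) (S i) * Hh (Y s) (S i))) * h)
  = K * rsum (S j) (fun s => c (j - s)%nat * (norm0_sq N h (Hh (Y (S s))) - norm0_sq N h (Hh (Y s)))).
Proof.
  unfold norm0_sq.
  transitivity (K * rsum (N - 1) (fun i => rsum (S j) (fun s => c (j - s)%nat *
      (Hh (Y (S s)) (S i) * Hh (Y (S s)) (S i) * h - Hh (Y s) (S i) * Hh (Y s) (S i) * h)))).
  { rewrite <- rsum_scal_l. apply rsum_ext. intros i _.
    rewrite Rmult_assoc, (Rmult_comm _ h), <- rsum_scal_l. f_equal. apply rsum_ext. intros s _. ring. }
  f_equal. rewrite rsum_swap. apply rsum_ext. intros s _.
  rewrite rsum_scal_l, <- rsum_minus. reflexivity.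
Qed.

(* Young's inequality against the coercivity [4/(3 l^2) |H_h z|^2 <= (-z_xx, H_h z)] *)
Lemma spatial_energy_bound (N : nat) (l a d : R) (z ph : nat -> R) :
  (1 <= N)%nat -> 0 < l -> 0 < a -> 0 <= d -> z 0%nat = 0 -> z N = 0 ->
  rsum (N - 1) (fun i => Hh z (S i) * (a * dxx (l / INR N) z (S i) - d * Hh z (S i) + Hh ph (S i)) * (l / INR N))
  <= 3 * l ^ 2 / (16 * a) * norm0_sq N (l / INR N) (Hh ph).
Proof.
  intros hN hl ha hd z0 zN. set (h := l / INR N).
  assert (hh : 0 < h) by (apply Rdiv_lt_0_compat; [lra | apply lt_0_INR; lia]).
  set (lam := 4 / (3 * l ^ 2)).
  assert (hlam0 : 0 < lam) by (apply Rdiv_lt_0_compat; nra).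
  assert (hlam : 0 < a * lam) by (apply Rmult_lt_0_compat; lra).
  set (Zs := norm0_sq N h (Hh z)). set (Ph := norm0_sq N h (Hh ph)).
  assert (hZ : 0 <= Zs) by (apply rsum_nonneg; intros; apply Rmult_le_pos; [apply Rle_0_sqr | lra]).
  pose proof (Hh_norm_le_dxx_Hh N l z hN hl z0 zN) as coer. fold h lam Zs in coer.
  assert (e : rsum (N - 1) (fun i => Hh z (S i) * (a * dxx h z (S i) - d * Hh z (S i) + Hh ph (S i)) * h)
     = - a * rsum (N - 1) (fun i => - dxx h z (S i) * Hh z (S i) * h) - d * Zs
       + rsum (N - 1) (fun i => Hh z (S i) * Hh ph (S i) * h)).
  { unfold Zs, norm0_sq. rewrite <- !rsum_scal_l, <- rsum_minus, <- rsum_plus. apply rsum_ext. intros; ring. }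
  assert (young : rsum (N - 1) (fun i => Hh z (S i) * Hh ph (S i) * h)
                  <= a * lam * Zs + / (4 * (a * lam)) * Ph).
  { unfold Zs, Ph, norm0_sq. rewrite <- !rsum_scal_l, <- rsum_plus. apply rsum_le. intros i _.
    set (p := Hh z (S i)). set (r := Hh ph (S i)).
    enough (p * r <= a * lam * (p * p) + / (4 * (a * lam)) * (r * r)) by nra.
    assert (a * lam * (p * p) + / (4 * (a * lam)) * (r * r) - p * r
            = (2 * (a * lam) * p - r) * (2 * (a * lam) * p - r) / (4 * (a * lam))) by (field; split; lra).
    assert (0 <= (2 * (a * lam) * p - r) * (2 * (a * lam) * p - r) / (4 * (a * lam)))
      by (apply Rle_mult_inv_pos; [apply Rle_0_sqr | lra]).
    lra. }
  assert (0 <= Ph) by (apply rsum_nonneg; intros; apply Rmult_le_pos; [apply Rle_0_sqr | lra]).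
  replace (3 * l ^ 2 / (16 * a)) with (/ (4 * (a * lam))) by (unfold lam; field; lra).
  rewrite e. nra.
Qed.

Lemma energy_step (N : nat) (l tau C sg a d : R) (c : nat -> R) (j : nat)
  (Y : nat -> nat -> R) (ph : nat -> R) :
  (1 <= N)%nat -> 0 < l -> 0 < tau -> 0 < C -> 0 < a -> 0 <= d -> 1/2 <= sg <= 1 ->
  (forall k, (1 <= k)%nat -> (k < j)%nat -> c (S k) <= c k) -> 0 <= c j ->
  ((1 <= j)%nat -> (1 - sg) ^ 2 * c 1%nat <= (c 0%nat - c 1%nat) * (2 * sg - 1)) ->
  Y j 0%nat = 0 -> Y j N = 0 -> Y (S j) 0%nat = 0 -> Y (S j) N = 0 ->
  (forall i, (1 <= i <= N - 1)%nat ->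
     C * rsum (S j) (fun s => c (j - s)%nat * ((Hh (Y (S s)) i - Hh (Y s) i) / tau)) =
     a * dxx (l / INR N) (fun m => sg * Y (S j) m + (1 - sg) * Y j m) i
     - d * Hh (fun m => sg * Y (S j) m + (1 - sg) * Y j m) i + Hh ph i) ->
  C / (2 * tau) * rsum (S j) (fun s => c (j - s)%nat *
      (norm0_sq N (l / INR N) (Hh (Y (S s))) - norm0_sq N (l / INR N) (Hh (Y s))))
  <= 3 * l ^ 2 / (16 * a) * norm0_sq N (l / INR N) (Hh ph).
Proof.
  intros hN hl htau hC ha hd hsg hmono hcj h01 b0 bN b0' bN' heq.
  set (h := l / INR N). fold h in heq.
  assert (hh : 0 < h) by (apply Rdiv_lt_0_compat; [lra | apply lt_0_INR; lia]).
  set (z := fun m => sg * Y (S j) m + (1 - sg) * Y j m). fold z in heq.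
  rewrite <- norm0_sq_weighted_diff.
  eapply Rle_trans; [|apply (spatial_energy_bound N l a d z ph); auto; unfold z;
                      [rewrite b0, b0' | rewrite bN, bN']; ring].
  apply rsum_le. intros i hi. apply Rmult_le_compat_r; [left; exact hh|].
  rewrite <- heq by lia.
  replace (Hh z (S i)) with (sg * Hh (Y (S j)) (S i) + (1 - sg) * Hh (Y j) (S i)) by (symmetry; apply Hh_lin).
  apply (frac_diff_sq_le c j C tau sg (fun s => Hh (Y s) (S i))); assumption.
Qed.

Lemma frac_diff_scale alpha tau : 0 < alpha < 1 -> 0 < tau ->
  Rpower tau (1 - alpha) / Gamma (2 - alpha) = tau / ((1 - alpha) * Rpower tau alpha * Gamma (1 - alpha)).
Proof.
  intros hal htau. pose proof (Gamma_1_minus_pos alpha hal). pose proof (Rpower_pos tau alpha).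
  rewrite Gamma_2_minus by exact hal.
  replace (1 - alpha) with (1 + - alpha) at 1 by ring.
  rewrite Rpower_plus, Rpower_Ropp, Rpower_1 by exact htau. field. repeat split; lra.
Qed.

Lemma c_coef_last_time_scale alpha T (M j : nat) : 0 < alpha < 1 -> 0 < T -> (j < M)%nat ->
  (1 - alpha) * Rpower (T / INR M) alpha <= c_coef alpha (1 - alpha / 2) j j * Rpower T alpha.
Proof.
  intros hal hT hj.
  assert (INR j + 1 <= INR M) by (rewrite <- S_INR; apply le_INR; lia).
  pose proof (pos_INR j). pose proof (Rpower_pos (INR M) alpha).
  replace (Rpower T alpha) with (Rpower (T / INR M) alpha * Rpower (INR M) alpha)
    by (rewrite Rpower_mult_distr by (try apply Rdiv_lt_0_compat; lra); f_equal; field; lra).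
  apply Rle_trans with (c_coef alpha (1 - alpha / 2) j j * Rpower (INR M) alpha * Rpower (T / INR M) alpha);
    [|right; ring].
  apply Rmult_le_compat_r; [left; apply Rpower_pos|].
  (* [c_j >= (1-α) (j+σ)^(-α) >= (1-α) M^(-α)] *)
  apply Rmult_le_reg_r with (/ Rpower (INR M) alpha); [now apply Rinv_0_lt_compat|].
  rewrite Rmult_assoc, Rinv_r, Rmult_1_r by lra.
  eapply Rle_trans; [|apply c_coef_last_ge; exact hal].
  rewrite <- rpowm_Rpower by lra.
  apply Rmult_le_compat_l; [lra | apply rpowm_antitone; lra].
Qed.

Lemma scheme_step_estimate (alpha l T c1 a d : R) (N M j : nat) (Y : nat -> nat -> R) (ph : nat -> R) :
  0 < alpha < 1 -> 0 < l -> 0 < T -> (1 <= N)%nat -> (j < M)%nat -> 0 < c1 <= a -> 0 <= d ->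
  Y j 0%nat = 0 -> Y j N = 0 -> Y (S j) 0%nat = 0 -> Y (S j) N = 0 ->
  (forall i, (1 <= i <= N - 1)%nat ->
     frac_diff alpha (1 - alpha / 2) (T / INR M) (fun s => Hh (Y s) i) j =
       a * dxx (l / INR N) (fun m => (1 - alpha / 2) * Y (S j) m + (1 - (1 - alpha / 2)) * Y j m) i
       - d * Hh (fun m => (1 - alpha / 2) * Y (S j) m + (1 - (1 - alpha / 2)) * Y j m) i + Hh ph i) ->
  rsum (S j) (fun s => c_coef alpha (1 - alpha / 2) j (j - s)%nat *
      (norm0_sq N (l / INR N) (Hh (Y (S s))) - norm0_sq N (l / INR N) (Hh (Y s))))
  <= c_coef alpha (1 - alpha / 2) j j *
     (l ^ 2 * Rpower T alpha * Gamma (1 - alpha) / c1 * norm0_sq N (l / INR N) (Hh ph)).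
Proof.
  intros hal hl hT hN hj ha hd b0 bN b0' bN' heq.
  set (tau := T / INR M). set (g := Gamma (1 - alpha)). set (Phi := norm0_sq N (l / INR N) (Hh ph)).
  assert (htau : 0 < tau) by (apply Rdiv_lt_0_compat; [lra | apply lt_0_INR; lia]).
  assert (hg : 0 < g) by (apply Gamma_1_minus_pos; exact hal).
  assert (hPhi : 0 <= Phi).
  { apply rsum_nonneg. intros. apply Rmult_le_pos; [apply Rle_0_sqr|].
    left. apply Rdiv_lt_0_compat; [lra | apply lt_0_INR; lia]. }
  set (D := (1 - alpha) * Rpower tau alpha * g).
  assert (hD : 0 < D)
    by (apply Rmult_lt_0_compat; [apply Rmult_lt_0_compat; [lra | apply Rpower_pos] | exact hg]).
  assert (hC : 0 < Rpower tau (1 - alpha) / Gamma (2 - alpha))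
    by (rewrite frac_diff_scale by assumption; now apply Rdiv_lt_0_compat).
  pose proof (energy_step N l tau _ (1 - alpha / 2) a d (c_coef alpha (1 - alpha / 2) j) j Y ph
    hN hl htau hC ltac:(lra) hd ltac:(lra) (fun k hk hkj => c_coef_succ_le alpha hal j k hk hkj)
    (Rlt_le _ _ (c_coef_last_pos alpha hal j)) (c_coef_alikhanov alpha hal j) b0 bN b0' bN' heq) as step.
  rewrite frac_diff_scale in step by assumption. fold g D Phi in step.
  set (S0 := rsum (S j) _) in *.
  assert (hS : S0 <= 3 / 8 * (D * (l ^ 2 * Phi)) / a).
  { apply (Rmult_le_reg_l (tau / D / (2 * tau))); [apply Rdiv_lt_0_compat; [apply Rdiv_lt_0_compat|]; lra|].
    eapply Rle_trans; [exact step|]. right. field. repeat split; lra. }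
  assert (hX : 0 <= D * (l ^ 2 * Phi))
    by (apply Rmult_le_pos; [lra | apply Rmult_le_pos; [apply pow2_ge_0 | exact hPhi]]).
  replace (c_coef alpha (1 - alpha / 2) j j * (l ^ 2 * Rpower T alpha * g / c1 * Phi))
    with (c_coef alpha (1 - alpha / 2) j j * Rpower T alpha * (g * (l ^ 2 * Phi) / c1)) by (field; lra).
  apply Rle_trans with ((1 - alpha) * Rpower tau alpha * (g * (l ^ 2 * Phi) / c1)).
  - replace ((1 - alpha) * Rpower tau alpha * (g * (l ^ 2 * Phi) / c1)) with (D * (l ^ 2 * Phi) / c1)
      by (unfold D; field; lra).
    assert (D * (l ^ 2 * Phi) / a <= D * (l ^ 2 * Phi) / c1)
      by (apply Rmult_le_compat_l; [exact hX | apply Rinv_le_contravar; lra]).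
    assert (0 <= D * (l ^ 2 * Phi) / a) by (apply Rle_mult_inv_pos; lra).
    unfold Rdiv in *. lra.
  - apply Rmult_le_compat_r; [|now apply c_coef_last_time_scale].
    apply Rle_mult_inv_pos; [|lra].
    apply Rmult_le_pos; [lra | apply Rmult_le_pos; [apply pow2_ge_0 | exact hPhi]].
Qed.

Lemma time_node_bounds T sigma (M j : nat) : 0 < T -> 0 <= sigma <= 1 -> (j < M)%nat ->
  0 <= (INR j + sigma) * (T / INR M) <= T.
Proof.
  intros hT hs hj.
  assert (INR j + 1 <= INR M) by (rewrite <- S_INR; apply le_INR; lia).
  assert (0 < INR M) by (apply lt_0_INR; lia). pose proof (pos_INR j).
  assert (0 < T / INR M) by (apply Rdiv_lt_0_compat; lra).
  split; [apply Rmult_le_pos; lra|].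
  apply Rle_trans with (INR M * (T / INR M)); [apply Rmult_le_compat_r; lra | right; field; lra].
Qed.

Lemma rmax_upto_ge n g m : (m <= n)%nat -> g m <= rmax_upto n g.
Proof.
  induction n as [|n IH]; intros hm; simpl.
  - replace m with 0%nat by lia. lra.
  - destruct (Nat.eq_dec m (S n)) as [->|ne]; [apply Rmax_r|].
    apply Rle_trans with (rmax_upto n g); [apply IH; lia | apply Rmax_l].
Qed.

Theorem theorem4
  (alpha l T c1 : R) (N M : nat)
  (k q : R -> R) (f : R -> R -> R) (u0 : R -> R) (y : nat -> nat -> R) :
  0 < alpha < 1 -> 0 < l -> 0 < T -> (1 <= N)%nat -> (1 <= M)%nat -> 0 < c1 ->
  (forall t, 0 <= t <= T -> c1 <= k t) ->
  (forall t, 0 <= t <= T -> 0 <= q t) ->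
  (forall t, 0 <= t <= T ->
     filterlim k (within (fun s => 0 <= s <= T) (locally t)) (locally (k t))) ->
  (forall t, 0 <= t <= T ->
     filterlim q (within (fun s => 0 <= s <= T) (locally t)) (locally (q t))) ->
  (forall x t, 0 <= x <= l -> 0 <= t <= T ->
     filterlim (fun p : R * R => f (fst p) (snd p))
       (within (fun p : R * R => 0 <= fst p <= l /\ 0 <= snd p <= T) (locally (x, t)))
       (locally (f x t))) ->
  let sigma := 1 - alpha / 2 in
  let h := l / INR N in
  let tau := T / INR M in
  let x := fun i : nat => INR i * h in
  let tsig := fun j : nat => (INR j + sigma) * tau in
  (* phi^{j+1}_i = f(x_i, t_{j+sigma}), i.e. phi^j_i = f(x_i, t_{j-1+sigma}) for j >= 1 *)
  let phi := fun (j i : nat) => f (x i) (tsig (Nat.pred j)) in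
  (forall j i, (j < M)%nat -> (1 <= i <= N - 1)%nat ->
     frac_diff alpha sigma tau (fun s => Hh (y s) i) j =
       k (tsig j) * dxx h (fun m => sigma * y (S j) m + (1 - sigma) * y j m) i
       - q (tsig j) * Hh (fun m => sigma * y (S j) m + (1 - sigma) * y j m) i
       + Hh (phi (S j)) i) ->
  (forall j, (j <= M)%nat -> y j 0%nat = 0 /\ y j N = 0) ->
  (forall i, (1 <= i <= N - 1)%nat -> y 0%nat i = u0 (x i)) ->
  forall j, (j < M)%nat ->
    norm0_sq N h (Hh (y (S j))) <=
      norm0_sq N h (Hh (y 0%nat))
      + l ^ 2 * Rpower T alpha * Gamma (1 - alpha) / c1
        * rmax_upto (M - 1) (fun m => norm0_sq N h (Hh (phi (S m)))).
Proof.
  intros hal hl hT hN hM hc1 hk hq _ _ _ sigma h tau x tsig phi heq hbd _ j hj.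
  apply (discrete_gronwall (c_coef alpha sigma) (fun s => norm0_sq N h (Hh (y s))) _ M);
    [intros; now apply c_coef_antitone | intros; now apply c_coef_0_pos | | exact hj].
  intros j0 hj0.
  assert (ht : 0 <= tsig j0 <= T) by (apply time_node_bounds; unfold sigma; lra || assumption).
  destruct (hbd j0 ltac:(lia)) as [b0 bN]. destruct (hbd (S j0) ltac:(lia)) as [b0' bN'].
  eapply Rle_trans.
  { apply (scheme_step_estimate alpha l T c1 (k (tsig j0)) (q (tsig j0)) N M j0 y (phi (S j0)));
      try assumption; [split; [exact hc1 | now apply hk] | now apply hq |].
    intros i hi. exact (heq j0 i hj0 hi). }
  apply Rmult_le_compat_l; [left; now apply c_coef_last_pos|].
  apply Rmult_le_compat_l; [|apply (rmax_upto_ge (M - 1) (fun m => norm0_sq N h (Hh (phi (S m))))); lia].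
  apply Rle_mult_inv_pos; [|exact hc1].
  apply Rmult_le_pos; [apply Rmult_le_pos; [apply pow2_ge_0 | left; apply Rpower_pos] | ].
  left. now apply Gamma_1_minus_pos.
Qed.
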